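(* Let $\mathcal G$ be a core network with input nodes $\iota_1,\dots,\iota_n$ and output node $o$, and let $\rho_k>\rho_{k+1}$ be two adjacent absolutely super-simple nodes. Then $\mathcal L'_m(\rho_k,\rho_{k+1})=\mathcal L'(\rho_k,\rho_{k+1})$ for every $m=1,\dots,n$.
   Context: Node $b$ is downstream from $a$ (and $a$ upstream from $b$) if there is a directed path from $a$ to $b$. Core network: every node upstream from $o$ and downstream from at least one input. $\mathcal G_m$: nodes downstream from $\iota_m$ and upstream from $o$, with arrows of $\mathcal G$ between them. Simple path: visits each node at most once; $\iota_mo$-simple path: simple path from $\iota_m$ to $o$. A node is $\iota_m$-simple if on some $\iota_mo$-simple path, $\iota_m$-appendage if downstream from $\iota_m$ but not $\iota_m$-simple; absolutely simple/absolutely appendage if $\iota_m$-simple/$\iota_m$-appendage for all $m$. $\iota_m$-super-simple: $\iota_m$-simple and on every $\iota_mo$-simple path; they occur in the same order on all $\iota_mo$-simple paths and adjacent means consecutive. Absolutely super-simple: on every $\iota_mo$-simple path for every $m$; ordered $\rho_1>\cdots>\rho_p>o$ ($b$ after $a$ on every such path), adjacent = consecutive. For a subnetwork $\mathcal K$, $\mathcal K$-path equivalence means directed paths inside $\mathcal K$ both ways. For an $\iota_mo$-simple path $S$: $C_mS$ = nodes of $\mathcal G_m$ not on $S$ with arrows of $\mathcal G_m$ between them; $CS$ = nodes of $\mathcal G$ not on $S$ with arrows of $\mathcal G$ between them. $\mathcal L_m(\rho_k,\rho_{k+1})$: $\iota_m$-simple nodes $\rho$ such that some $\iota_mo$-simple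 path visits $\rho_k,\rho,\rho_{k+1}$ in that order (arrows of $\mathcal G_m$ among them). $\mathcal L(\rho_k,\rho_{k+1})$: absolutely simple nodes $\rho$ such that for some $m$ some $\iota_mo$-simple path visits $\rho_k,\rho,\rho_{k+1}$ in that order. $\mathcal L'_m(\rho_k,\rho_{k+1})$: nodes of $\mathcal L_m(\rho_k,\rho_{k+1})$ together with all $\iota_m$-appendage nodes that are $C_mS_m$-path equivalent to nodes of $\mathcal L_m(\rho_k,\rho_{k+1})$ for some $\iota_mo$-simple path $S_m$, with arrows of $\mathcal G_m$ among them. $\mathcal L'(\rho_k,\rho_{k+1})$ (absolutely super-simple structural subnetwork): nodes of $\mathcal L(\rho_k,\rho_{k+1})$ together with all absolutely appendage nodes that are $CS_m$-path equivalent to nodes in $\mathcal L(\rho_k,\rho_{k+1})$ for some $\iota_mo$-simple path $S_m$ and some $m$, with arrows of $\mathcal G$ among them. *)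

From mathcomp Require Import all_boot.
Set Implicit Arguments. Unset Strict Implicit. Unset Printing Implicit Defensive.

(* Network: node type V, arrow relation e (e x y = arrow x -> y),
   inputs inp : 'I_n -> V (inp i = iota_{i+1}), output o. *)

Definition well_formed_io (V : finType) (n : nat) (inp : 'I_n -> V) (o : V) : Prop :=
  injective inp /\ (forall m, inp m != o).

Definition downstream (V : finType) (e : rel V) (a b : V) : bool := connect e a b.

Definition core_network (V : finType) (e : rel V) (n : nat) (inp : 'I_n -> V) (o : V)
  : Prop :=
  forall v : V, downstream e v o /\ exists m : 'I_n, downstream e (inp m) v.

Definition simple_path (V : finType) (e : rel V) (a b : V) (p : seq V) : bool :=
  [&& path e a p, last a p == b & uniq (a :: p)].

(* iota_m o-simple path; its node list is inp m :: p *)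
Definition io_path (V : finType) (e : rel V) (n : nat) (inp : 'I_n -> V) (o : V)
  (m : 'I_n) (p : seq V) : bool := simple_path e (inp m) o p.

Definition inGm (V : finType) (e : rel V) (n : nat) (inp : 'I_n -> V) (o : V)
  (m : 'I_n) (v : V) : bool := downstream e (inp m) v && downstream e v o.

Definition is_simple (V : finType) (e : rel V) (n : nat) (inp : 'I_n -> V) (o : V)
  (m : 'I_n) (v : V) : Prop :=
  exists p, io_path e inp o m p /\ v \in inp m :: p.

Definition is_appendage (V : finType) (e : rel V) (n : nat) (inp : 'I_n -> V) (o : V)
  (m : 'I_n) (v : V) : Prop :=
  downstream e (inp m) v /\ ~ is_simple e inp o m v.

Definition abs_simple (V : finType) (e : rel V) (n : nat) (inp : 'I_n -> V) (o : V)
  (v : V) : Prop := forall m, is_simple e inp o m v.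

Definition abs_appendage (V : finType) (e : rel V) (n : nat) (inp : 'I_n -> V) (o : V)
  (v : V) : Prop := forall m, is_appendage e inp o m v.

Definition abs_super_simple (V : finType) (e : rel V) (n : nat) (inp : 'I_n -> V)
  (o : V) (v : V) : Prop :=
  forall m p, io_path e inp o m p -> v \in inp m :: p.

(* a > b in the order of absolutely super-simple nodes: b comes after a on
   every iota_m o-simple path, for every m *)
Definition ss_before (V : finType) (e : rel V) (n : nat) (inp : 'I_n -> V) (o : V)
  (a b : V) : Prop :=
  forall m p, io_path e inp o m p -> index a (inp m :: p) < index b (inp m :: p).

Definition adjacent_abs_ss (V : finType) (e : rel V) (n : nat) (inp : 'I_n -> V)
  (o : V) (a b : V) : Prop :=
  [/\ abs_super_simple e inp o a, abs_super_simple e inp o b, ss_before e inp o a b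
    & ~ exists c, [/\ abs_super_simple e inp o c, ss_before e inp o a c
                   & ss_before e inp o c b]].

Definition Lm (V : finType) (e : rel V) (n : nat) (inp : 'I_n -> V) (o : V)
  (m : 'I_n) (a b v : V) : Prop :=
  exists p, io_path e inp o m p /\
    let s := inp m :: p in
    [/\ a \in s, v \in s, b \in s & index a s <= index v s <= index b s].

Definition Labs (V : finType) (e : rel V) (n : nat) (inp : 'I_n -> V) (o : V)
  (a b v : V) : Prop :=
  abs_simple e inp o v /\ exists m, Lm e inp o m a b v.

Definition path_equiv (V : finType) (e : rel V) (K : {set V}) (x y : V) : Prop :=
  let eK := [rel u w | [&& e u w, u \in K & w \in K]] in
  [/\ x \in K, y \in K, connect eK x y & connect eK y x].

(* C_m S and C S for an iota_m o-simple path S = inp m :: p *)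
Definition CmS (V : finType) (e : rel V) (n : nat) (inp : 'I_n -> V) (o : V)
  (m : 'I_n) (p : seq V) : {set V} :=
  [set v | inGm e inp o m v & v \notin inp m :: p].

Definition CS (n : nat) (V : finType) (inp : 'I_n -> V) (m : 'I_n) (p : seq V)
  : {set V} := [set v | v \notin inp m :: p].

Definition Lpm_node (V : finType) (e : rel V) (n : nat) (inp : 'I_n -> V) (o : V)
  (m : 'I_n) (a b v : V) : Prop :=
  Lm e inp o m a b v \/
  (is_appendage e inp o m v /\
   exists p r, [/\ io_path e inp o m p, Lm e inp o m a b r
                 & path_equiv e (CmS e inp o m p) v r]).

Definition Lpm_arrow (V : finType) (e : rel V) (n : nat) (inp : 'I_n -> V) (o : V)
  (m : 'I_n) (a b x y : V) : Prop :=
  [/\ e x y, Lpm_node e inp o m a b x, Lpm_node e inp o m a b y,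
      inGm e inp o m x & inGm e inp o m y].

Definition Lp_node (V : finType) (e : rel V) (n : nat) (inp : 'I_n -> V) (o : V)
  (a b v : V) : Prop :=
  Labs e inp o a b v \/
  (abs_appendage e inp o v /\
   exists m p r, [/\ io_path e inp o m p, Labs e inp o a b r
                   & path_equiv e (CS inp m p) v r]).

Definition Lp_arrow (V : finType) (e : rel V) (n : nat) (inp : 'I_n -> V) (o : V)
  (a b x y : V) : Prop :=
  [/\ e x y, Lp_node e inp o a b x & Lp_node e inp o a b y].

From mathcomp Require Import all_boot.
Set Implicit Arguments. Unset Strict Implicit. Unset Printing Implicit Defensive.

(* Since rk is absolutely super-simple, every io-simple path passes through it,
   and the tail of such a path after rk can be grafted onto the head (up to rk)
   of an io-simple path from any input: a node shared by the head of one and the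
   tail of the other would yield a walk from an input to o avoiding rk.  Hence
   L_m(rk, rk1), which only depends on tails after rk, is independent of m and
   consists of absolutely simple nodes.  A node reaching o without meeting rk
   lies after rk on every io-simple path containing it; this makes the
   components of C_m S and C S around nodes of L coincide, and turns
   iota_m-appendages path-equivalent to L into absolute appendages. *)

Lemma leq_index_cat (T : eqType) (s1 s2 : seq T) x y :
  uniq (s1 ++ s2) -> x \in s2 ->
  (y \in s1 ++ s2) && (index x (s1 ++ s2) <= index y (s1 ++ s2))
  = (y \in s2) && (index x s2 <= index y s2).
Proof.
rewrite cat_uniq => /and3P[_ /hasPn s2Ns1 _] xs2.
rewrite !index_cat mem_cat (negbTE (s2Ns1 x xs2)).
have [ys1|ys1] /= := boolP (y \in s1).
  rewrite (negbTE (contraL (s2Ns1 y) _)) ?ys1 //.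
  by rewrite leqNgt ltn_addr // index_mem.
by rewrite leq_add2l.
Qed.

Lemma cons_cat_belast (T : Type) (x : T) s1 s2 :
  x :: s1 ++ s2 = belast x s1 ++ last x s1 :: s2.
Proof. by rewrite -cat_cons lastI cat_rcons. Qed.

Lemma ordered_in_tail (T : eqType) (s1 s2 : seq T) a v b : uniq (s1 ++ a :: s2) ->
  (let s := s1 ++ a :: s2 in
   [/\ a \in s, v \in s, b \in s & index a s <= index v s <= index b s]) <->
  [/\ v \in a :: s2, b \in a :: s2 & index v (a :: s2) <= index b (a :: s2)].
Proof.
move=> us; have as2 := mem_head a s2.
have vE := leq_index_cat v us as2; rewrite index_head leq0n andbT in vE.
split=> [[_ vs bs /andP[av vb]]|[vs2 bs2 vb2]].
  have vs2 : v \in a :: s2 by rewrite -vE vs av.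
  by move: (leq_index_cat b us vs2); rewrite bs vb => /esym/andP[].
move: vE (leq_index_cat b us vs2); rewrite vs2 bs2 vb2 => /andP[vs av] /andP[bs vb].
by apply: And4; rewrite // ?av ?vb // mem_cat as2 orbT.
Qed.

Lemma mem_path_connect (T : finType) (r : rel T) x p z :
  path r x p -> z \in x :: p -> connect r x z /\ connect r z (last x p).
Proof.
move=> rxp zin; case/splitPl: zin rxp => p1 p2 <-; rewrite cat_path last_cat => /andP[rp1 rp2].
by split; apply/connectP; [exists p1 | exists p2].
Qed.

Section InducedSubgraph.
Variables (V : finType) (e : rel V).

Definition induced (X : pred V) : rel V := [rel u w | [&& e u w, X u & X w]].

Lemma path_induced (X : pred V) x p : path e x p -> all X (x :: p) -> path (induced X) x p.
Proof.
elim: p x => //= y p IHp x /andP[exy eyp] /and3P[Xx Xy Xp].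
by rewrite /induced /= exy Xx Xy IHp //= Xy.
Qed.

Lemma connect_induced_closed (X : pred V) x y : X x -> connect (induced X) x y -> X y.
Proof.
move=> Xx /connectP[p Xxp ->]; have: all X (x :: p).
  by rewrite /= Xx; elim: p x Xxp {Xx} => //= z p IHp x /andP[/and3P[_ _ ->] /IHp].
by move/allP; apply; apply: mem_last.
Qed.

Lemma connect_induced_source (X : pred V) x y :
  connect (induced X) x y -> x != y -> X x.
Proof.
case/connectP=> [[|z p]] /=; first by move=> _ ->; rewrite eqxx.
by case/andP=> /and3P[].
Qed.

Lemma induced_sub (X : pred V) : subrel (induced X) e.
Proof. by move=> x y /and3P[]. Qed.

Lemma connect_induced (X : pred V) : subrel (connect (induced X)) (connect e).
Proof. by apply: connect_sub => x y /induced_sub; apply: connect1. Qed.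

Lemma connect_induced_mono (X Y : pred V) : (forall z, X z -> Y z) ->
  subrel (connect (induced X)) (connect (induced Y)).
Proof.
move=> XY; apply: connect_sub => x y /and3P[exy Xx Xy].
by apply: connect1; rewrite /induced /= exy !XY.
Qed.

Lemma connect_induced_through (X Y : pred V) x y :
  (forall z, connect (induced X) x z -> connect (induced X) z y -> Y z) ->
  connect (induced X) x y -> connect (induced Y) x y.
Proof.
move=> Ythrough /connectP[p Xxp ylast]; apply/connectP; exists p => //.
apply: path_induced; first exact: (sub_path (@induced_sub X) Xxp).
by apply/allP=> z /(mem_path_connect Xxp); rewrite -ylast => -[]; apply: Ythrough.
Qed.

Lemma path_equiv_restrict (K K' : {set V}) x y :
  (forall z, path_equiv e K z y -> z \in K') ->
  path_equiv e K x y -> path_equiv e K' x y.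
Proof.
move=> sccK' [xK yK cxy cyx].
have zK z : connect (induced (mem K)) x z -> z \in K.
  exact: connect_induced_closed.
split; [apply: sccK'; split=> // | apply: sccK'; split=> // | |].
- apply: (@connect_induced_through (mem K) (mem K')) cxy => z cxz czy.
  by apply: sccK'; split=> //; [exact: zK | exact: connect_trans cyx cxz].
- apply: (@connect_induced_through (mem K) (mem K')) cyx => z cyz czx.
  by apply: sccK'; split=> //; [exact: zK (connect_trans cxy cyz) | exact: connect_trans czx cxy].
Qed.

End InducedSubgraph.

Section InputOutputPaths.
Variables (V : finType) (e : rel V) (n : nat) (inp : 'I_n -> V) (o : V).

Lemma io_path_exists m : downstream e (inp m) o -> exists p, io_path e inp o m p.
Proof.
case/connectP=> p ep ->; have [p' ep' up' _] := shortenP ep.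
by exists p'; rewrite /io_path /simple_path ep' up' eqxx.
Qed.

Lemma io_path_cat m p1 p2 : io_path e inp o m (p1 ++ p2) ->
  [/\ path e (inp m) p1, path e (last (inp m) p1) p2, last (last (inp m) p1) p2 = o,
      uniq (inp m :: p1) & uniq p2 /\ ~~ has (mem (inp m :: p1)) p2].
Proof.
rewrite /io_path /simple_path cat_path last_cat -cat_cons cat_uniq.
by case/and3P=> /andP[? ?] /eqP ? /and3P[? ? ?].
Qed.

Lemma io_path_inGm m p x : io_path e inp o m p -> x \in inp m :: p -> inGm e inp o m x.
Proof.
by case/and3P=> ep /eqP <- _ /(mem_path_connect ep)[mx xo]; rewrite /inGm /downstream mx xo.
Qed.

Lemma inGm_path_equiv m (K : {set V}) x r :
  inGm e inp o m r -> path_equiv e K x r -> inGm e inp o m x.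
Proof.
case/andP=> mr ro [_ _ /connect_induced xr /connect_induced rx].
by rewrite /inGm /downstream (connect_trans mr rx) (connect_trans xr ro).
Qed.

Lemma tail_sub m p1 p2 a : last (inp m) p1 = a -> {subset a :: p2 <= inp m :: p1 ++ p2}.
Proof.
move=> p1a v; rewrite -cat_cons mem_cat inE => /predU1P[->|->]; last by rewrite orbT.
by rewrite -p1a mem_last.
Qed.

End InputOutputPaths.

Section SuperSimpleNode.
Variables (V : finType) (e : rel V) (n : nat) (inp : 'I_n -> V) (o a : V).
Hypothesis inp_neq_o : forall m, inp m != o.
Hypothesis a_ss : abs_super_simple e inp o a.

Local Notation avoid_a := (induced e (predC1 a)).

Lemma no_avoiding_walk m : ~ connect avoid_a (inp m) o.
Proof.
move=> mo; have mNa : inp m != a := connect_induced_source mo (inp_neq_o m).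
case/connectP: (mo) => p ap op.
case: (shortenP (sub_path (@induced_sub _ e _) ap)) op => p' ep' up' p'_sub op.
have /a_ss : io_path e inp o m p' by rewrite /io_path /simple_path ep' up' -op eqxx.
rewrite inE eq_sym (negbTE mNa) => /p'_sub ap_a.
have /(connect_induced_closed (X := predC1 a) mNa) : connect avoid_a (inp m) a.
  by apply: (path_connect ap); rewrite inE ap_a orbT.
by rewrite /= eqxx.
Qed.

Lemma io_path_split m p : io_path e inp o m p ->
  exists p1 p2, p = p1 ++ p2 /\ last (inp m) p1 = a.
Proof. by case/a_ss/splitPl=> p1 p2 p1a; exists p1, p2. Qed.

Section SplitPath.
Variables (m : 'I_n) (p1 p2 : seq V).
Hypotheses (iop : io_path e inp o m (p1 ++ p2)) (p1a : last (inp m) p1 = a).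

Lemma a_notin_tail : a \notin p2.
Proof.
have [_ _ _ _ [_ /hasPn p2Np1]] := io_path_cat iop.
by apply/negP=> /p2Np1; rewrite inE -p1a mem_last.
Qed.

Lemma tail_avoid v : v \in p2 -> connect avoid_a v o.
Proof.
have [_ ep2 p2o _ _] := io_path_cat iop; rewrite p1a in ep2 p2o.
have aNp2 := a_notin_tail.
case: p2 ep2 p2o aNp2 => // y q /= /andP[_ eq] qo aNyq vyq.
rewrite -qo; apply: (mem_path_connect (path_induced eq _) vyq).2.
by apply/allP=> z zyq; apply: contraNneq aNyq => <-.
Qed.

Lemma head_avoid v : v \in inp m :: p1 -> v != a -> connect avoid_a (inp m) v.
Proof.
have [ep1 _ _ up1 _] := io_path_cat iop.
move=> vp1 vNa; case/splitPl: vp1 ep1 up1 p1a => q1 q2 q1v.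
rewrite cat_path -cat_cons cat_uniq last_cat q1v => /andP[eq1 _] /and3P[_ /hasPn q2Nq1 _] q2a.
rewrite -q1v; apply/connectP; exists q1 => //; apply: path_induced eq1 _.
apply/allP=> z zq1 /=; apply: contraTneq zq1 => ->.
case: q2 q2a q2Nq1 => [/= va|y q /= <- q2Nq1]; first by rewrite va eqxx in vNa.
by apply: q2Nq1; rewrite mem_last.
Qed.

Lemma head_not_avoid v : v \in inp m :: p1 -> v != a -> ~ connect avoid_a v o.
Proof. by move=> vp1 vNa /(connect_trans (head_avoid vp1 vNa)); apply: no_avoiding_walk. Qed.

Lemma avoid_in_tail v : v \in inp m :: p1 ++ p2 -> connect avoid_a v o -> v \in a :: p2.
Proof.
rewrite -cat_cons mem_cat => /orP[vp1 vo|vp2 _]; last by rewrite inE vp2 orbT.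
have [->|vNa] := eqVneq v a; first exact: mem_head.
by case: (head_not_avoid vp1 vNa).
Qed.

End SplitPath.

Lemma io_path_splice m p1 p2 m' q1 q2 :
  io_path e inp o m (p1 ++ p2) -> last (inp m) p1 = a ->
  io_path e inp o m' (q1 ++ q2) -> last (inp m') q1 = a ->
  io_path e inp o m (p1 ++ q2).
Proof.
move=> iop p1a ioq q1a; have [ep1 _ _ up1 _] := io_path_cat iop.
have [_ eq2 q2o _ [uq2 _]] := io_path_cat ioq; rewrite q1a in eq2 q2o.
rewrite /io_path /simple_path cat_path last_cat p1a ep1 eq2 q2o eqxx -cat_cons cat_uniq.
rewrite up1 uq2 /= andbT; apply/hasPn=> w wq2.
have wo := tail_avoid ioq q1a wq2.
have wNa : w != a by apply: contraNneq (a_notin_tail ioq q1a) => <-.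
by apply/negP=> wp1; apply: (head_not_avoid iop p1a wp1 wNa wo).
Qed.

Section CoreNetwork.
Hypothesis core : core_network e inp o.

Lemma io_path_through m : exists p1 p2,
  io_path e inp o m (p1 ++ p2) /\ last (inp m) p1 = a.
Proof.
have [p iop] := io_path_exists (proj1 (core (inp m))).
by have [p1 [p2 [pE p1a]]] := io_path_split iop; exists p1, p2; rewrite -pE.
Qed.

Lemma tail_is_simple m m' q1 q2 v :
  io_path e inp o m' (q1 ++ q2) -> last (inp m') q1 = a -> v \in a :: q2 ->
  is_simple e inp o m v.
Proof.
move=> ioq q1a vq2; have [t1 [t2 [iot t1a]]] := io_path_through m.
exists (t1 ++ q2); split; first exact: io_path_splice iot t1a ioq q1a.
exact: tail_sub t1a _ vq2.
Qed.

Lemma is_simple_avoid m m' v :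
  is_simple e inp o m' v -> connect avoid_a v o -> is_simple e inp o m v.
Proof.
case=> q [ioq vq] vo; have [q1 [q2 [qE q1a]]] := io_path_split ioq; subst q.
exact: tail_is_simple ioq q1a (avoid_in_tail ioq q1a vq vo).
Qed.

Variable b : V.

Lemma LmP m v : Lm e inp o m a b v <->
  exists p1 p2, [/\ io_path e inp o m (p1 ++ p2), last (inp m) p1 = a,
    v \in a :: p2, b \in a :: p2 & index v (a :: p2) <= index b (a :: p2)].
Proof.
split=> [[p [iop ord]]|[p1 [p2 [iop p1a vp2 bp2 vb]]]].
  have [p1 [p2 [pE p1a]]] := io_path_split iop; subst p.
  case/and3P: (iop) ord => _ _; rewrite cons_cat_belast p1a => us /(ordered_in_tail v b us).
  by case=> vp2 bp2 vb; exists p1, p2.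
exists (p1 ++ p2); split=> //; case/and3P: (iop) => _ _.
by rewrite cons_cat_belast p1a => us; apply/(ordered_in_tail v b us).
Qed.

Lemma Lm_any_input m m' v : Lm e inp o m' a b v -> Lm e inp o m a b v.
Proof.
case/LmP=> p1 [p2 [iop p1a vp2 bp2 vb]]; have [t1 [t2 [iot t1a]]] := io_path_through m.
by apply/LmP; exists t1, p2; split=> //; apply: io_path_splice iot t1a iop p1a.
Qed.

Lemma Lm_inGm m v : Lm e inp o m a b v -> inGm e inp o m v.
Proof. by case=> p [iop [_ vp _ _]]; apply: io_path_inGm iop vp. Qed.

Lemma Lm_Labs m v : Lm e inp o m a b v -> Labs e inp o a b v.
Proof.
move=> Lv; split; last by exists m.
by move=> m'; have [p [iop [_ vp _ _]]] := Lm_any_input m' Lv; exists p.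
Qed.

Lemma Labs_Lm m v : Labs e inp o a b v -> Lm e inp o m a b v.
Proof. by case=> _ [m' Lv]; apply: Lm_any_input Lv. Qed.

Lemma path_equiv_Lm_avoid m (K : {set V}) v r :
  a \notin K -> Lm e inp o m a b r -> path_equiv e K v r -> connect avoid_a v o.
Proof.
move=> aNK /LmP[p1 [p2 [iop p1a rp2 _ _]]] [_ rK vr _].
have rNa : r != a by apply: contraNneq aNK => <-.
have rp2' : r \in p2 by move: rp2; rewrite inE (negbTE rNa).
apply: connect_trans (tail_avoid iop p1a rp2').
by apply: connect_induced_mono vr => z /=; apply: contraTneq => ->.
Qed.

Lemma Lpm_node_Lp m v : Lpm_node e inp o m a b v -> Lp_node e inp o a b v.
Proof.
case=> [Lv|[[_ vNsimple] [p [r [iop Lr vr]]]]]; first by left; apply: Lm_Labs Lv.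
have aNK : a \notin CmS e inp o m p by rewrite in_set negb_and negbK (a_ss iop) orbT.
right; split=> [m'|].
  split=> [|sv]; last exact: vNsimple (is_simple_avoid m sv (path_equiv_Lm_avoid aNK Lr vr)).
  have /andP[m'r _] := Lm_inGm (Lm_any_input m' Lr).
  by case: vr => _ _ _ /connect_induced rv; apply: connect_trans m'r rv.
exists m, p, r; split=> //; first exact: Lm_Labs Lr.
by apply: path_equiv_restrict vr => z [+ _ _ _]; rewrite !in_set => /andP[].
Qed.

Lemma Lp_node_Lpm m v : Lp_node e inp o a b v -> Lpm_node e inp o m a b v.
Proof.
case=> [Lv|[vapp [m' [q [r [ioq Lr vr]]]]]]; first by left; apply: Labs_Lm Lv.
right; split; first exact: vapp m.
have Lrm := Labs_Lm m Lr.
have [q1 [q2 [qE q1a]]] := io_path_split ioq; subst q.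
have [t1 [t2 [iot t1a]]] := io_path_through m.
have iop := io_path_splice iot t1a ioq q1a.
have aNK : a \notin CS inp m' (q1 ++ q2) by rewrite in_set negbK (a_ss ioq).
exists (t1 ++ q2), r; split=> //.
apply: path_equiv_restrict vr => u ur; rewrite in_set (inGm_path_equiv (Lm_inGm Lrm) ur) /=.
have [uK _ _ _] := ur; move: uK; rewrite in_set; apply: contra => ut.
exact: tail_sub q1a _ (avoid_in_tail iop t1a ut (path_equiv_Lm_avoid aNK Lrm ur)).
Qed.

Lemma Lp_node_inGm m x : Lp_node e inp o a b x -> inGm e inp o m x.
Proof.
case=> [[xs _]|[_ [m' [q [r [_ Lr xr]]]]]].
  by have [p [iop xp]] := xs m; apply: io_path_inGm iop xp.
exact: inGm_path_equiv (Lm_inGm (Labs_Lm m Lr)) xr.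
Qed.

End CoreNetwork.
End SuperSimpleNode.

Theorem lemma3p23 (V : finType) (e : rel V) (n : nat) (inp : 'I_n -> V) (o : V)
  (rk rk1 : V) :
  well_formed_io inp o ->
  core_network e inp o ->
  adjacent_abs_ss e inp o rk rk1 ->
  forall m : 'I_n,
    (forall v : V, Lpm_node e inp o m rk rk1 v <-> Lp_node e inp o rk rk1 v) /\
    (forall x y : V, Lpm_arrow e inp o m rk rk1 x y <-> Lp_arrow e inp o rk rk1 x y).
Proof.
move=> [_ inp_neq_o] core [rk_ss _ _ _] m.
have Lp_of_Lpm := Lpm_node_Lp inp_neq_o rk_ss core (b := rk1) (m := m).
have Lpm_of_Lp := Lp_node_Lpm inp_neq_o rk_ss core (b := rk1) m.
have inGm_of_Lp := Lp_node_inGm inp_neq_o rk_ss core (b := rk1) m.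
split=> [v|x y]; first by split; [apply: Lp_of_Lpm | apply: Lpm_of_Lp].
split=> [[exy /Lp_of_Lpm xL /Lp_of_Lpm yL _ _]|[exy xL yL]]; first by split.
by split=> //; [apply: Lpm_of_Lp | apply: Lpm_of_Lp | apply: inGm_of_Lp | apply: inGm_of_Lp].
Qed.
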